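(* Let $b\in C^1([0,\infty))$ satisfy $b(t)>0$ for all $t\ge0$ and $b_0:=\limsup_{t\to\infty}\frac{|b'(t)|}{b(t)^2}<1$. Define for $t\ge0$ $$\Phi(t)=\int_t^\infty\exp\Big(-\int_t^sb(\sigma)\,d\sigma\Big)\,ds.$$ Then $\Phi$ is well defined (finite) and: (i) $\Phi(0)=B_0:=\int_0^\infty\exp(-\int_0^sb(\sigma)d\sigma)\,ds$, and $\Phi'(t)-b(t)\Phi(t)=-1$ for every $t\ge0$; (ii) there exist constants $t_0>0$, $B_1>0$, $B_2>0$ such that $\frac{B_1}{b(t)}\le\Phi(t)\le\frac{B_2}{b(t)}$ for every $t\ge t_0$; (iii) for every $t\ge t_0$, $|\Phi'(t)|\le\frac{1+b_0}{1-b_0}$; in particular $\Phi'$ is bounded on $[0,\infty)$. *)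

From Stdlib Require Import Reals.
From Coquelicot Require Import Coquelicot.
Open Scope R_scope.

(* f' t is the derivative of f at t relative to the domain [0, +oo)
   (one-sided at t = 0, ordinary two-sided derivative at t > 0). *)
Definition is_derive_nonneg (f f' : R -> R) (t : R) : Prop :=
  filterlim (fun s => (f s - f t) / (s - t))
    (within (fun s => 0 <= s /\ s <> t) (locally t)) (locally (f' t)).

Definition continuous_nonneg (g : R -> R) (t : R) : Prop :=
  filterlim g (within (fun s => 0 <= s) (locally t)) (locally (g t)).

(* limsup_{t -> +oo} f t = l  (l a real number); mirrors Coquelicot's
   is_LimSup_seq for a function of a real variable. *)
Definition is_LimSup_infty (f : R -> R) (l : R) : Prop :=
  forall eps : posreal,
    (forall T : R, exists t, T <= t /\ l - eps < f t) /\
    (exists T : R, forall t, T <= t -> f t < l + eps).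

Definition Phi_integrand (b : R -> R) (t s : R) : R := exp (- RInt b t s).

Definition Phi (b : R -> R) (t : R) : R :=
  RInt_gen (Phi_integrand b t) (at_point t) (Rbar_locally p_infty).

From Stdlib Require Import Reals Lra Classical.
From Coquelicot Require Import Coquelicot.
Open Scope R_scope.

(* Extend b to the whole line by b (max 0 x), and put B x = int_0^x b and
   E = exp (- B).  Then Phi t = exp (B t) * int_t^oo E, and Phi' = b Phi - 1 is
   the product rule.  Past a point T where |b'| / b^2 <= c < 1, the function
   s |-> E s / b s + (1 - c) int_t^s E is nonincreasing, so the tails of E are
   bounded by E t / ((1 - c) b t): this gives convergence and the upper bound.
   There 1/b is also c-Lipschitz, so b <= 2 b t on [t, t + 1/(2 b t)], where
   E >= E t / e: this gives the lower bound.  With c = (1 + b0) / 2, the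
   resulting bounds 0 <= b Phi <= 1 / (1 - c) give |Phi'| <= c / (1 - c) =
   (1 + b0) / (1 - b0). *)

Lemma is_derive_nonneg_is_derive (f f' : R -> R) (t : R) :
  0 < t -> is_derive_nonneg f f' t -> is_derive f t (f' t).
Proof.
  intros Ht H. apply is_derive_Reals. intros eps Heps.
  destruct (H (ball (f' t) (mkposreal eps Heps)) (locally_ball _ _)) as [d Hd].
  assert (Hdt : 0 < Rmin d t) by (apply Rmin_glb_lt; [apply cond_pos | lra]).
  exists (mkposreal _ Hdt). intros h Hh0 Hh. simpl in Hh.
  assert (Hhd : Rabs h < d) by (eapply Rlt_le_trans; [exact Hh | apply Rmin_l]).
  assert (Hht : Rabs h < t) by (eapply Rlt_le_trans; [exact Hh | apply Rmin_r]).
  apply Rabs_def2 in Hht.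
  replace h with (t + h - t) at 2 by ring.
  apply Hd; [| split; lra].
  change (Rabs (t + h - t) < d). now replace (t + h - t) with h by ring.
Qed.

Lemma is_derive_nonneg_of_is_derive (f g f' : R -> R) (t : R) :
  0 <= t -> (forall s, 0 <= s -> f s = g s) -> is_derive g t (f' t) ->
  is_derive_nonneg f f' t.
Proof.
  intros Ht Hfg H. apply is_derive_Reals in H.
  intros P [eps HP]. destruct (H eps (cond_pos eps)) as [d Hd].
  exists d. intros s Hs [Hs0 Hst].
  apply HP. rewrite (Hfg s Hs0), (Hfg t Ht).
  replace s with (t + (s - t)) at 1 by ring.
  apply Hd; [lra | exact Hs].
Qed.

Lemma is_derive_nonneg_continuous (f f' : R -> R) (t : R) :
  is_derive_nonneg f f' t -> continuous_nonneg f t.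
Proof.
  intros H. set (K := Rabs (f' t) + 1).
  assert (HK : 0 < K) by (unfold K; pose proof (Rabs_pos (f' t)); lra).
  destruct (H (ball (f' t) (mkposreal 1 Rlt_0_1)) (locally_ball _ _)) as [d Hd].
  apply filterlim_locally. intros eps.
  assert (Hde : 0 < Rmin d (eps / K)).
  { apply Rmin_glb_lt; [apply cond_pos | apply Rdiv_lt_0_compat; [apply cond_pos | lra]]. }
  exists (mkposreal _ Hde). intros s Hs Hs0. simpl in Hs.
  destruct (Req_dec s t) as [-> | Hst]; [apply ball_center |].
  assert (Hsd : Rabs (s - t) < d) by (eapply Rlt_le_trans; [exact Hs | apply Rmin_l]).
  assert (HsK : Rabs (s - t) * K < eps).
  { apply Rlt_le_trans with (eps / K * K); [| right; field; lra].
    apply Rmult_lt_compat_r; [lra |]. eapply Rlt_le_trans; [exact Hs | apply Rmin_r]. }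
  specialize (Hd s Hsd (conj Hs0 Hst)).
  change (Rabs ((f s - f t) / (s - t) - f' t) < 1) in Hd.
  change (Rabs (f s - f t) < eps).
  assert (Hq : Rabs ((f s - f t) / (s - t)) <= K).
  { replace ((f s - f t) / (s - t)) with (((f s - f t) / (s - t) - f' t) + f' t) by ring.
    unfold K. pose proof (Rabs_triang ((f s - f t) / (s - t) - f' t) (f' t)). lra. }
  replace (f s - f t) with ((f s - f t) / (s - t) * (s - t)) by (field; lra).
  rewrite Rabs_mult. eapply Rle_lt_trans; [| exact HsK].
  rewrite Rmult_comm. apply Rmult_le_compat_l; [apply Rabs_pos | exact Hq].
Qed.

Definition ext0 (f : R -> R) (x : R) : R := f (Rmax 0 x).

Lemma ext0_nonneg (f : R -> R) (x : R) : 0 <= x -> ext0 f x = f x.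
Proof. intros Hx. unfold ext0. now rewrite Rmax_right. Qed.

Lemma continuous_Rmax0 (x : R) : continuous (Rmax 0) x.
Proof.
  apply filterlim_locally. intros eps. exists eps. intros y Hy.
  change (Rabs (y - x) < eps) in Hy. change (Rabs (Rmax 0 y - Rmax 0 x) < eps).
  eapply Rle_lt_trans; [| exact Hy].
  unfold Rmax, Rabs; repeat destruct Rle_dec; repeat destruct Rcase_abs; lra.
Qed.

Lemma continuous_ext0 (f : R -> R) :
  (forall t, 0 <= t -> continuous_nonneg f t) -> forall x, continuous (ext0 f) x.
Proof.
  intros Hf x. apply (filterlim_comp _ _ _ (Rmax 0) f _ (within (fun s => 0 <= s) (locally (Rmax 0 x)))).
  - intros P HP. change (locally x (fun y => P (Rmax 0 y))).
    apply (filter_imp (fun y => 0 <= Rmax 0 y -> P (Rmax 0 y))).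
    + intros y Hy. apply Hy, Rmax_l.
    + exact (continuous_Rmax0 x _ HP).
  - apply Hf, Rmax_l.
Qed.

Lemma bounded_nonneg_of_bounded_tail (g : R -> R) (K T : R) :
  (forall x, continuous g x) -> (forall t, T <= t -> Rabs (g t) <= K) ->
  exists M, forall t, 0 <= t -> Rabs (g t) <= M.
Proof.
  intros Hg HK. destruct (bounded_continuity g 0 T (fun x _ => Hg x)) as [M HM].
  exists (Rmax M K). intros t Ht. destruct (Rle_lt_dec T t) as [HTt | HtT].
  - eapply Rle_trans; [apply HK, HTt | apply Rmax_r].
  - eapply Rle_trans; [apply Rlt_le, (HM t); lra | apply Rmax_l].
Qed.

Lemma is_LimSup_infty_lt (f : R -> R) (l c : R) :
  is_LimSup_infty f l -> l < c -> exists T, forall t, T <= t -> f t < c.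
Proof.
  intros Hl Hc. destruct (Hl (mkposreal (c - l) ltac:(lra))) as [_ [T HT]].
  exists T. intros t Ht. specialize (HT t Ht). cbn [pos] in HT. lra.
Qed.

Lemma is_LimSup_infty_nonneg (f : R -> R) (l : R) :
  is_LimSup_infty f l -> (forall t, 0 <= t -> 0 <= f t) -> 0 <= l.
Proof.
  intros Hl Hf. apply Rnot_lt_le. intros Hneg.
  destruct (is_LimSup_infty_lt f l 0 Hl Hneg) as [T HT].
  specialize (HT (Rmax 0 T) (Rmax_r _ _)). specialize (Hf (Rmax 0 T) (Rmax_l _ _)). lra.
Qed.

Lemma nonincreasing_of_is_derive (f df : R -> R) (a : R) :
  (forall x, a <= x -> is_derive f x (df x)) -> (forall x, a <= x -> df x <= 0) ->
  forall x y, a <= x <= y -> f y <= f x.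
Proof.
  intros Hf Hdf x y Hxy.
  destruct (MVT_gen f x y df) as [z [Hz Heq]];
    rewrite Rmin_left, Rmax_right in * by lra.
  - intros z Hz. apply Hf. lra.
  - intros z Hz. apply continuity_pt_filterlim, (ex_derive_continuous (V := R_NormedModule)).
    exists (df z). apply Hf. lra.
  - assert (df z * (y - x) <= 0); [| lra].
    rewrite <- (Rmult_0_l (y - x)). apply Rmult_le_compat_r; [lra | apply Hdf; lra].
Qed.

Lemma nondecreasing_bounded_cvg (F : R -> R) (K : R) :
  (forall x y, x <= y -> F x <= F y) -> (forall x, F x <= K) ->
  exists l, filterlim F (Rbar_locally p_infty) (locally l).
Proof.
  intros Hmono HK. set (A := fun y => exists x, y = F x).
  destruct (completeness A) as [l [Hub Hlub]].
  - exists K. intros y [x ->]. apply HK.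
  - exists (F 0), 0. reflexivity.
  - exists l. apply filterlim_locally. intros eps.
    assert (Hx0 : exists x0, l - eps < F x0).
    { apply NNPP. intros Hno. assert (l <= l - eps); [| pose proof (cond_pos eps); lra].
      apply Hlub. intros y [x ->]. apply Rnot_lt_le. intros Hx. apply Hno. now exists x. }
    destruct Hx0 as [x0 Hx0]. exists x0. intros x Hx.
    assert (F x <= l) by (apply Hub; now exists x).
    pose proof (Hmono x0 x (Rlt_le _ _ Hx)).
    change (Rabs (F x - l) < eps). apply Rabs_def1; lra.
Qed.

Lemma is_RInt_gen_at_point_p_infty (f : R -> R) (a l : R) :
  (forall b, ex_RInt f a b) ->
  filterlim (fun b => RInt f a b) (Rbar_locally p_infty) (locally l) ->
  is_RInt_gen f (at_point a) (Rbar_locally p_infty) l.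
Proof.
  intros Hf Hl.
  apply (filterlimi_lim_ext_loc (fun ab : R * R => RInt f (fst ab) (snd ab))).
  - apply Filter_prod with (fun x => x = a) (fun _ => True).
    + reflexivity.
    + apply filter_true.
    + intros x y -> _. apply (RInt_correct (V := R_CompleteNormedModule)), Hf.
  - intros P HP. apply Filter_prod with (fun x => x = a) (fun b => P (RInt f a b)).
    + reflexivity.
    + exact (Hl P HP).
    + now intros x y ->.
Qed.

Lemma exp_le (x y : R) : x <= y -> exp x <= exp y.
Proof. intros [Hlt | ->]; [apply Rlt_le, exp_increasing, Hlt | apply Rle_refl]. Qed.

Section Primitive.

Variable b : R -> R.
Hypothesis b_cont : forall x, continuous b x.

Definition B (x : R) : R := RInt b 0 x.
Definition E (x : R) : R := exp (- B x).

Lemma ex_RInt_b (x y : R) : ex_RInt b x y.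
Proof. apply (ex_RInt_continuous (V := R_CompleteNormedModule)). intros; apply b_cont. Qed.

Lemma is_derive_B (x : R) : is_derive B x (b x).
Proof.
  apply (is_derive_RInt _ _ 0); [| apply b_cont].
  apply filter_forall. intros y. apply (RInt_correct (V := R_CompleteNormedModule)), ex_RInt_b.
Qed.

Lemma RInt_b_Chasles (x y z : R) : RInt b x y + RInt b y z = RInt b x z.
Proof. exact (RInt_Chasles b x y z (ex_RInt_b _ _) (ex_RInt_b _ _)). Qed.

Lemma B_sub (t x : R) : B x - B t = RInt b t x.
Proof. unfold B. rewrite <- (RInt_b_Chasles 0 t x). ring. Qed.

Lemma exp_B_mul_E (t : R) : exp (B t) * E t = 1.
Proof. unfold E. rewrite <- exp_plus, Rplus_opp_r. apply exp_0. Qed.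

Lemma is_derive_E (x : R) : is_derive E x (- b x * E x).
Proof.
  unfold E. apply (is_derive_comp exp (fun y => - B y)); [apply is_derive_exp |].
  apply (is_derive_opp B), is_derive_B.
Qed.

Lemma continuous_E (x : R) : continuous E x.
Proof. apply (ex_derive_continuous (V := R_NormedModule)). eexists. apply is_derive_E. Qed.

Lemma ex_RInt_E (x y : R) : ex_RInt E x y.
Proof. apply (ex_RInt_continuous (V := R_CompleteNormedModule)). intros; apply continuous_E. Qed.

Lemma RInt_E_Chasles (x y z : R) : RInt E x y + RInt E y z = RInt E x z.
Proof. exact (RInt_Chasles E x y z (ex_RInt_E _ _) (ex_RInt_E _ _)). Qed.

Lemma RInt_E_nonneg (x y : R) : x <= y -> 0 <= RInt E x y.
Proof. intros Hxy. apply RInt_ge_0; [exact Hxy | apply ex_RInt_E | intros; apply Rlt_le, exp_pos]. Qed.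

Lemma Phi_integrand_eq (t s : R) : Phi_integrand b t s = exp (B t) * E s.
Proof. unfold Phi_integrand, E. rewrite <- B_sub, <- exp_plus. f_equal. ring. Qed.

Section SlowVariation.

Variables (b' : R -> R) (c T : R).
Hypothesis b_derive : forall t, T <= t -> is_derive b t (b' t).
Hypothesis b_pos : forall t, T <= t -> 0 < b t.
Hypothesis b_ratio : forall t, T <= t -> Rabs (b' t) / b t ^ 2 <= c.
Hypothesis c_lt_1 : c < 1.

Lemma is_derive_inv_b (t : R) : T <= t -> is_derive (fun s => / b s) t (- b' t / b t ^ 2).
Proof. intros Ht. apply is_derive_inv; [apply b_derive, Ht | apply Rgt_not_eq, b_pos, Ht]. Qed.

Lemma ratio_bound (t : R) : T <= t -> - c <= b' t / b t ^ 2 <= c.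
Proof.
  intros Ht. apply Rabs_le_between. unfold Rdiv.
  rewrite Rabs_mult, (Rabs_right (/ _)); [apply b_ratio, Ht |].
  apply Rle_ge, Rlt_le, Rinv_0_lt_compat, pow_lt, b_pos, Ht.
Qed.

Lemma inv_b_sub_le (t y : R) : T <= t <= y -> / b t - / b y <= c * (y - t).
Proof.
  intros Hty.
  assert (H : - / b y - c * y <= - / b t - c * t); [| lra].
  apply (nonincreasing_of_is_derive (fun s => - / b s - c * s)
           (fun s => - (- b' s / b s ^ 2) - c * 1) T); [| | exact Hty].
  - intros s Hs. apply (is_derive_minus (fun s => - / b s) (fun s => c * s)).
    + apply (is_derive_opp (fun s => / b s)), is_derive_inv_b, Hs.
    + apply is_derive_scal. exact (is_derive_id (K := R_AbsRing) s).
  - intros s Hs. pose proof (ratio_bound s Hs). lra.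
Qed.

Lemma b_le_double (t y : R) : T <= t -> t <= y <= t + / (2 * b t) -> b y <= 2 * b t.
Proof.
  intros Ht Hty. pose proof (b_pos t ltac:(lra)) as Hbt. pose proof (b_pos y ltac:(lra)) as Hby.
  assert (Hinv : / (2 * b t) <= / b y).
  { pose proof (inv_b_sub_le t y ltac:(lra)) as H.
    assert (c * (y - t) <= y - t) by nra.
    replace (/ (2 * b t)) with (/ b t - / (2 * b t)) by (field; lra). lra. }
  apply Rinv_le_contravar in Hinv; [| apply Rinv_0_lt_compat; lra].
  now rewrite !Rinv_inv in Hinv.
Qed.

Lemma E_ge (t y : R) : T <= t -> t <= y <= t + / (2 * b t) -> exp (-1) * E t <= E y.
Proof.
  intros Ht Hty. pose proof (b_pos t ltac:(lra)) as Hbt.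
  assert (HB : RInt b t y <= 1).
  { apply Rle_trans with (RInt (fun _ => 2 * b t) t y).
    - apply RInt_le; [lra | apply ex_RInt_b | apply ex_RInt_const |].
      intros z Hz. apply b_le_double; lra.
    - rewrite RInt_const. change ((y - t) * (2 * b t) <= 1).
      apply Rle_trans with (/ (2 * b t) * (2 * b t)); [| right; field; lra].
      apply Rmult_le_compat_r; lra. }
  unfold E. rewrite <- exp_plus. apply exp_le.
  rewrite <- (B_sub t y) in HB. lra.
Qed.

Lemma RInt_E_ge (t : R) : T <= t -> / (2 * b t) * (exp (-1) * E t) <= RInt E t (t + / (2 * b t)).
Proof.
  intros Ht. pose proof (b_pos t Ht) as Hbt.
  assert (Hd : 0 < / (2 * b t)) by (apply Rinv_0_lt_compat; lra).
  apply Rle_trans with (RInt (fun _ => exp (-1) * E t) t (t + / (2 * b t))).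
  - right. rewrite RInt_const. replace (t + / (2 * b t) - t) with (/ (2 * b t)) by ring.
    reflexivity.
  - apply RInt_le; [lra | apply ex_RInt_const | apply ex_RInt_E |].
    intros y Hy. apply E_ge; lra.
Qed.

Lemma RInt_E_tail_le (t S : R) : T <= t <= S -> RInt E t S <= E t / b t / (1 - c).
Proof.
  intros HtS.
  set (h := fun s => E s * / b s + (1 - c) * RInt E t s).
  assert (Hh : h S <= h t).
  { apply (nonincreasing_of_is_derive h
      (fun s => - b s * E s * / b s + E s * (- b' s / b s ^ 2) + (1 - c) * E s) T); [| | lra].
    - intros s Hs. apply (is_derive_plus (fun s => E s * / b s) (fun s => (1 - c) * RInt E t s)).
      + apply (is_derive_mult E (fun s => / b s)); [apply is_derive_E | apply is_derive_inv_b, Hs |].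
        intros; apply Rmult_comm.
      + apply is_derive_scal, (is_derive_RInt _ _ t); [| apply continuous_E].
        apply filter_forall. intros y. apply (RInt_correct (V := R_CompleteNormedModule)), ex_RInt_E.
    - intros s Hs. pose proof (b_pos s Hs). pose proof (ratio_bound s Hs). pose proof (exp_pos (- B s)).
      replace (- b s * E s * / b s + E s * (- b' s / b s ^ 2) + (1 - c) * E s)
        with (E s * (- (b' s / b s ^ 2) - c)) by (field; lra).
      unfold E. nra. }
  unfold h in Hh. rewrite RInt_point in Hh. change (@zero R_CompleteNormedModule) with 0 in Hh.
  assert (0 <= E S * / b S).
  { pose proof (b_pos S ltac:(lra)).
    apply Rmult_le_pos; [apply Rlt_le, exp_pos | apply Rlt_le, Rinv_0_lt_compat; lra]. }
  apply Rmult_le_reg_l with (1 - c); [lra |].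
  replace ((1 - c) * (E t / b t / (1 - c))) with (E t * / b t) by (field; pose proof (b_pos t ltac:(lra)); lra).
  lra.
Qed.

Lemma RInt_E_cvg : exists l, filterlim (fun S => RInt E 0 S) (Rbar_locally p_infty) (locally l).
Proof.
  assert (Hmono : forall x y, x <= y -> RInt E 0 x <= RInt E 0 y).
  { intros x y Hxy. rewrite <- (RInt_E_Chasles 0 x y). pose proof (RInt_E_nonneg x y Hxy). lra. }
  apply (nondecreasing_bounded_cvg _ (RInt E 0 T + E T / b T / (1 - c)) Hmono).
  intros x. destruct (Rle_lt_dec T x) as [HTx | HxT].
  - rewrite <- (RInt_E_Chasles 0 T x).
    pose proof (RInt_E_tail_le T x (conj (Rle_refl T) HTx)). lra.
  - assert (0 <= E T / b T / (1 - c)).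
    { pose proof (b_pos T (Rle_refl T)). pose proof (exp_pos (- B T)). unfold E, Rdiv.
      apply Rmult_le_pos; [apply Rmult_le_pos |]; apply Rlt_le; try apply Rinv_0_lt_compat; lra. }
    pose proof (Hmono x T (Rlt_le _ _ HxT)). lra.
Qed.

Definition Psi (t : R) : R := RInt_gen E (at_point t) (Rbar_locally p_infty).

Lemma RInt_E_cvg_Psi (t : R) :
  filterlim (fun S => RInt E t S) (Rbar_locally p_infty) (locally (Psi t)).
Proof.
  destruct RInt_E_cvg as [l Hl].
  assert (Hlt : filterlim (fun S => RInt E t S) (Rbar_locally p_infty) (locally (l - RInt E 0 t))).
  { apply (filterlim_ext (fun S => RInt E 0 S - RInt E 0 t)).
    - intros S. rewrite <- (RInt_E_Chasles 0 t S). ring.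
    - apply (filterlim_comp _ _ _ (fun S => RInt E 0 S) (fun y => y - RInt E 0 t) _ (locally l));
        [exact Hl |].
      apply (continuous_minus (fun y => y) (fun _ => RInt E 0 t));
        [apply continuous_id | apply continuous_const]. }
  replace (Psi t) with (l - RInt E 0 t); [exact Hlt |].
  symmetry. apply is_RInt_gen_unique, is_RInt_gen_at_point_p_infty; [apply ex_RInt_E | exact Hlt].
Qed.

Lemma is_RInt_gen_Psi (t : R) : is_RInt_gen E (at_point t) (Rbar_locally p_infty) (Psi t).
Proof. apply is_RInt_gen_at_point_p_infty; [apply ex_RInt_E | apply RInt_E_cvg_Psi]. Qed.

Lemma Psi_Chasles (a t : R) : RInt E a t + Psi t = Psi a.
Proof.
  symmetry. apply is_RInt_gen_unique, (is_RInt_gen_Chasles E t); [| apply is_RInt_gen_Psi].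
  apply is_RInt_gen_at_point, (RInt_correct (V := R_CompleteNormedModule)), ex_RInt_E.
Qed.

Lemma is_derive_Psi (t : R) : is_derive Psi t (- E t).
Proof.
  apply (is_derive_ext (fun x => Psi 0 - RInt E 0 x)).
  { intros x. change (Psi 0 - RInt E 0 x = Psi x :> R). rewrite <- (Psi_Chasles 0 x). ring. }
  replace (- E t) with (0 - E t) by ring.
  apply (is_derive_minus (fun _ => Psi 0) (fun x => RInt E 0 x));
    [exact (is_derive_const (K := R_AbsRing) _ _) |].
  apply (is_derive_RInt _ _ 0); [| apply continuous_E].
  apply filter_forall. intros y. apply (RInt_correct (V := R_CompleteNormedModule)), ex_RInt_E.
Qed.

Lemma Psi_nonneg (t : R) : 0 <= Psi t.
Proof.
  assert (H : Rbar_le 0 (Psi t)); [| exact H].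
  apply (filterlim_le (F := Rbar_locally p_infty) (fun _ => 0) (fun S => RInt E t S));
    [| apply filterlim_const | exact (RInt_E_cvg_Psi t)].
  exists t. intros S HS. apply RInt_E_nonneg. lra.
Qed.

Lemma Psi_le (t : R) : T <= t -> Psi t <= E t / b t / (1 - c).
Proof.
  intros Ht. assert (H : Rbar_le (Psi t) (E t / b t / (1 - c))); [| exact H].
  apply (filterlim_le (F := Rbar_locally p_infty) (fun S => RInt E t S) (fun _ => E t / b t / (1 - c)));
    [| exact (RInt_E_cvg_Psi t) | apply filterlim_const].
  exists t. intros S HS. apply RInt_E_tail_le. lra.
Qed.

Lemma Psi_ge (t : R) : T <= t -> / (2 * b t) * (exp (-1) * E t) <= Psi t.
Proof.
  intros Ht. rewrite <- (Psi_Chasles t (t + / (2 * b t))).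
  pose proof (RInt_E_ge t Ht). pose proof (Psi_nonneg (t + / (2 * b t))). lra.
Qed.

Lemma is_RInt_gen_Phi_integrand (t : R) :
  is_RInt_gen (Phi_integrand b t) (at_point t) (Rbar_locally p_infty) (exp (B t) * Psi t).
Proof.
  apply (is_RInt_gen_ext (fun s => scal (exp (B t)) (E s))).
  - apply filter_forall. intros _ s _. symmetry. apply Phi_integrand_eq.
  - exact (is_RInt_gen_scal E (exp (B t)) (Psi t) (is_RInt_gen_Psi t)).
Qed.

Lemma Phi_eq (t : R) : Phi b t = exp (B t) * Psi t.
Proof. exact (is_RInt_gen_unique _ _ (is_RInt_gen_Phi_integrand t)). Qed.

Lemma is_RInt_gen_Phi (t : R) :
  is_RInt_gen (Phi_integrand b t) (at_point t) (Rbar_locally p_infty) (Phi b t).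
Proof. rewrite Phi_eq. apply is_RInt_gen_Phi_integrand. Qed.

Lemma is_derive_Phi (t : R) : is_derive (Phi b) t (b t * Phi b t - 1).
Proof.
  replace (b t * Phi b t - 1) with (b t * exp (B t) * Psi t + exp (B t) * - E t)
    by (rewrite Phi_eq, <- (exp_B_mul_E t); ring).
  apply (is_derive_ext (fun x => exp (B x) * Psi x)); [intros x; symmetry; apply Phi_eq |].
  apply (is_derive_mult (fun x => exp (B x)) Psi); [| apply is_derive_Psi | intros; apply Rmult_comm].
  apply (is_derive_comp exp B); [apply is_derive_exp | apply is_derive_B].
Qed.

Lemma Phi_bounds (t : R) : T <= t -> exp (-1) / 2 / b t <= Phi b t <= / (1 - c) / b t.
Proof.
  intros Ht. pose proof (b_pos t Ht). pose proof (exp_pos (B t)) as HB.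
  rewrite Phi_eq. split.
  - apply Rle_trans with (exp (B t) * (/ (2 * b t) * (exp (-1) * E t))).
    + right. transitivity (exp (-1) / 2 / b t * (exp (B t) * E t)).
      * rewrite exp_B_mul_E. ring.
      * field. lra.
    + apply Rmult_le_compat_l; [lra | apply Psi_ge, Ht].
  - apply Rle_trans with (exp (B t) * (E t / b t / (1 - c))).
    + apply Rmult_le_compat_l; [lra | apply Psi_le, Ht].
    + right. transitivity (/ (1 - c) / b t * (exp (B t) * E t)).
      * field. lra.
      * rewrite exp_B_mul_E. ring.
Qed.

Lemma Rabs_derive_Phi_le (t : R) : 1 / 2 <= c -> T <= t -> Rabs (b t * Phi b t - 1) <= c / (1 - c).
Proof.
  intros Hc Ht. pose proof (b_pos t Ht). destruct (Phi_bounds t Ht) as [Hlo Hhi].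
  assert (0 <= b t * Phi b t).
  { apply Rmult_le_pos; [lra |]. eapply Rle_trans; [| exact Hlo].
    pose proof (exp_pos (-1)). apply Rmult_le_pos; [lra | apply Rlt_le, Rinv_0_lt_compat; lra]. }
  assert (b t * Phi b t <= / (1 - c)).
  { apply Rmult_le_compat_l with (r := b t) in Hhi; [| lra].
    replace (b t * (/ (1 - c) / b t)) with (/ (1 - c)) in Hhi by (field; lra). exact Hhi. }
  replace (c / (1 - c)) with (/ (1 - c) - 1) by (field; lra).
  assert (2 <= / (1 - c)).
  { replace 2 with (/ (1 / 2)) by field. apply Rinv_le_contravar; lra. }
  apply Rabs_le. lra.
Qed.

Lemma continuous_Phi_deriv (t : R) : continuous (fun x => b x * Phi b x - 1) t.
Proof.
  apply (continuous_minus (fun x => b x * Phi b x) (fun _ => 1)); [| apply continuous_const].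
  apply (continuous_mult b (Phi b)); [apply b_cont |].
  apply (ex_derive_continuous (V := R_NormedModule)). eexists. apply is_derive_Phi.
Qed.

End SlowVariation.

End Primitive.

Lemma is_derive_nonneg_ext0 (f f' : R -> R) (t : R) :
  0 <= t -> is_derive_nonneg f f' t -> is_derive_nonneg (ext0 f) f' t.
Proof.
  intros Ht H. unfold is_derive_nonneg in *.
  apply (filterlim_within_ext (F := locally t) (fun s => 0 <= s /\ s <> t)
           (fun s => (f s - f t) / (s - t))); [| exact H].
  intros s [Hs _]. now rewrite !ext0_nonneg.
Qed.

Lemma is_RInt_gen_Phi_integrand_ext0 (f : R -> R) (t l : R) : 0 <= t ->
  is_RInt_gen (Phi_integrand (ext0 f) t) (at_point t) (Rbar_locally p_infty) l ->
  is_RInt_gen (Phi_integrand f t) (at_point t) (Rbar_locally p_infty) l.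
Proof.
  intros Ht. apply is_RInt_gen_ext.
  apply Filter_prod with (fun x => x = t) (fun y => t < y); [reflexivity | now exists t |].
  intros x y -> Hy z Hz. simpl in Hz. rewrite Rmin_left, Rmax_right in Hz by lra.
  unfold Phi_integrand. do 2 f_equal. apply RInt_ext. intros u Hu.
  rewrite Rmin_left, Rmax_right in Hu by lra. apply ext0_nonneg. lra.
Qed.

Theorem lemma2p2 (b b' : R -> R) (b0 : R)
  (Hder : forall t, 0 <= t -> is_derive_nonneg b b' t)
  (Hcont : forall t, 0 <= t -> continuous_nonneg b' t)
  (Hpos : forall t, 0 <= t -> 0 < b t)
  (Hb0 : is_LimSup_infty (fun t => Rabs (b' t) / (b t ^ 2)) b0)
  (Hb0lt : b0 < 1) :
  (forall t, 0 <= t ->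
     ex_RInt_gen (Phi_integrand b t) (at_point t) (Rbar_locally p_infty)) /\
  Phi b 0 = RInt_gen (fun s => exp (- RInt b 0 s)) (at_point 0) (Rbar_locally p_infty) /\
  exists Phi' : R -> R,
    (forall t, 0 <= t ->
       is_derive_nonneg (Phi b) Phi' t /\ Phi' t - b t * Phi b t = -1) /\
    exists t0 B1 B2 : R,
      0 < t0 /\ 0 < B1 /\ 0 < B2 /\
      (forall t, t0 <= t -> B1 / b t <= Phi b t <= B2 / b t) /\
      (forall t, t0 <= t -> Rabs (Phi' t) <= (1 + b0) / (1 - b0)) /\
      (exists M : R, forall t, 0 <= t -> Rabs (Phi' t) <= M).
Proof.
  assert (Hb0_nonneg : 0 <= b0).
  { apply (is_LimSup_infty_nonneg _ _ Hb0). intros t Ht.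
    apply Rmult_le_pos; [apply Rabs_pos | apply Rlt_le, Rinv_0_lt_compat, pow_lt, Hpos, Ht]. }
  set (c := (1 + b0) / 2). assert (Hc : 1 / 2 <= c < 1) by (unfold c; lra).
  destruct (is_LimSup_infty_lt _ _ c Hb0) as [T0 HT0]; [unfold c; lra |].
  set (T := Rmax 1 T0). assert (HT1 : 1 <= T) by apply Rmax_l. assert (HT0T : T0 <= T) by apply Rmax_r.
  set (bb := ext0 b).
  assert (Hbb : forall t, T <= t -> bb t = b t) by (intros t Ht; apply ext0_nonneg; lra).
  assert (Hbb_cont : forall x, continuous bb x).
  { apply continuous_ext0. intros t Ht. eapply is_derive_nonneg_continuous, Hder, Ht. }
  assert (Hbb_der : forall t, T <= t -> is_derive bb t (b' t)).
  { intros t Ht. apply is_derive_nonneg_is_derive; [lra |]. apply is_derive_nonneg_ext0, Hder; lra. }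
  assert (Hbb_pos : forall t, T <= t -> 0 < bb t) by (intros t Ht; rewrite Hbb by lra; apply Hpos; lra).
  assert (Hbb_ratio : forall t, T <= t -> Rabs (b' t) / bb t ^ 2 <= c).
  { intros t Ht. rewrite Hbb by lra. apply Rlt_le, HT0. lra. }
  assert (HPhi : forall t, 0 <= t ->
    is_RInt_gen (Phi_integrand b t) (at_point t) (Rbar_locally p_infty) (Phi bb t)).
  { intros t Ht. apply is_RInt_gen_Phi_integrand_ext0, (is_RInt_gen_Phi bb Hbb_cont b' c T); tauto. }
  assert (HPhi_eq : forall t, 0 <= t -> Phi b t = Phi bb t) by (intros; apply is_RInt_gen_unique, HPhi; auto).
  assert (Hderiv_le : forall t, T <= t -> Rabs (bb t * Phi bb t - 1) <= (1 + b0) / (1 - b0)).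
  { intros t Ht. replace ((1 + b0) / (1 - b0)) with (c / (1 - c)) by (unfold c; field; lra).
    apply (Rabs_derive_Phi_le bb Hbb_cont b' c T); tauto. }
  split; [intros t Ht; eexists; apply HPhi, Ht |]. split; [reflexivity |].
  exists (fun t => bb t * Phi bb t - 1). split.
  { intros t Ht. split.
    - apply (is_derive_nonneg_of_is_derive _ (Phi bb)); [exact Ht | exact HPhi_eq |].
      apply (is_derive_Phi bb Hbb_cont b' c T); tauto.
    - rewrite HPhi_eq by exact Ht. unfold bb. rewrite ext0_nonneg by exact Ht. ring. }
  exists T, (exp (-1) / 2), (/ (1 - c)).
  split; [lra |]. split; [pose proof (exp_pos (-1)); lra |]. split; [apply Rinv_0_lt_compat; lra |].
  split; [intros t Ht; rewrite HPhi_eq, <- Hbb by lra; apply (Phi_bounds bb Hbb_cont b' c T); tauto |].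
  split; [exact Hderiv_le |].
  eapply (bounded_nonneg_of_bounded_tail _ _ T); [| exact Hderiv_le].
  intros x. apply (continuous_Phi_deriv bb Hbb_cont b' c T); tauto.
Qed.
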